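(* Let $\mathbb{K}$ be a field, $m<n$, and let $A \in \mathbb{K}[x]^{m\times n}$ have full rank $m$, with Popov form $P \in \mathbb{K}[x]^{m\times n}$. Let $C \in \mathbb{K}[x]^{(n-m)\times n}$ be such that the $n\times n$ matrix $\begin{bmatrix} A \\ C\end{bmatrix}$ is nonsingular and $\min(\mathrm{rdeg}(C)) > \deg(P)$. Let $\hat P$ be the Popov form of $\begin{bmatrix} A \\ C\end{bmatrix}$. Then $C$ is a completion of $A$ if and only if the multiset of entries of $\mathrm{rdeg}(\hat P)$ contains the multiset of entries of $\mathrm{rdeg}(C)$. Moreover, in this case, $P$ is equal to the submatrix of $\hat P$ formed by its rows of degree less than $\min(\mathrm{rdeg}(C))$.
   Context: For a row vector $p=[p_1,\dots,p_n]\in\mathbb{K}[x]^{1\times n}$, $\deg(p)=\max_j \deg(p_j)$ (with $\deg 0=-\infty$). For a matrix $M$, $\mathrm{rdeg}(M)$ is the tuple of degrees of its rows and $\deg(M)$ the maximum degree of its entries. If $M\in\mathbb{K}[x]^{k\times n}$ has no zero row, its leading matrix $\mathrm{lm}(M)\in\mathbb{K}^{k\times n}$ has $(i,j)$ entry equal to the coefficient of degree $\deg(\text{row } i)$ of $M_{i,j}$. A matrix $R\in\mathbb{K}[x]^{k\times n}$ with $k\le n$ is (row) reduced if it has no zero row and $\mathrm{lm}(R)$ has full rank $k$. The pivot index of a nonzero row vector $p$ is the largest $j$ with $\deg(p_j)=\deg(p)$, and $p_j$ is its pivot entry. A matrix $P\in\mathbb{K}[x]^{k\times n}$ is in Popov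 form if it has no zero row, the pivot indices of its rows are strictly increasing, its pivot entries are monic, and in each column containing a pivot entry all other entries have degree strictly less than that pivot entry. The Popov form of a matrix $A$ of rank $r$ is the unique matrix in $\mathbb{K}[x]^{r\times n}$ in Popov form whose rows generate the same $\mathbb{K}[x]$-module as the rows of $A$. For $A\in\mathbb{K}[x]^{m\times n}$ of full rank $m<n$ with Popov form $P$, a completion of $A$ is any $C\in\mathbb{K}[x]^{(n-m)\times n}$ such that $\min(\mathrm{rdeg}(C))>\deg(P)$ and $\begin{bmatrix} P\\ C\end{bmatrix}$ is row reduced. *)

From HB Require Import structures.
From mathcomp Require Import all_boot all_order all_algebra fraction.
Set Implicit Arguments. Unset Strict Implicit. Unset Printing Implicit Defensive.
Import Order.TTheory GRing.Theory Num.Theory.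
Local Open Scope ring_scope.

Section PolyMat.
Variable K : fieldType.

(* Degrees are encoded through [size] : for p : {poly K},
   size p = deg p + 1, and size 0 = 0 encodes deg 0 = -oo.
   This is an order isomorphism {-oo} \cup N -> N, so all degree
   comparisons / multisets of degrees are faithfully represented. *)

(* rsize M i = deg(row i of M) + 1  (0 iff the row is zero) *)
Definition rsize k n (M : 'M[{poly K}]_(k, n)) (i : 'I_k) : nat :=
  (\max_(j < n) size (M i j))%N.

(* msize M = deg(M) + 1 (0 iff M = 0, in particular if k = 0) *)
Definition msize k n (M : 'M[{poly K}]_(k, n)) : nat :=
  (\max_(i < k) rsize M i)%N.

Definition rdegs k n (M : 'M[{poly K}]_(k, n)) : seq nat :=
  [seq rsize M i | i <- enum 'I_k].

Definition no_zero_row k n (M : 'M[{poly K}]_(k, n)) : Prop :=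
  forall i : 'I_k, (0 < rsize M i)%N.

Definition lmat k n (M : 'M[{poly K}]_(k, n)) : 'M[K]_(k, n) :=
  \matrix_(i < k, j < n) (M i j)`_((rsize M i).-1).

Definition row_reduced k n (M : 'M[{poly K}]_(k, n)) : Prop :=
  (k <= n)%N /\ no_zero_row M /\ \rank (lmat M) = k.

Definition is_pivot k n (M : 'M[{poly K}]_(k, n)) (i : 'I_k) (j : 'I_n) : Prop :=
  size (M i j) = rsize M i /\
  forall j' : 'I_n, (j < j')%N -> (size (M i j') < rsize M i)%N.

Definition popov k n (M : 'M[{poly K}]_(k, n)) : Prop :=
  no_zero_row M /\
  exists piv : 'I_k -> 'I_n,
    [/\ forall i, is_pivot M i (piv i),
        forall i i' : 'I_k, (i < i')%N -> (piv i < piv i')%N,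
        forall i, M i (piv i) \is monic &
        forall i i' : 'I_k, i' != i -> (size (M i' (piv i)) < size (M i (piv i)))%N].

Definition in_rowmod k n (M : 'M[{poly K}]_(k, n)) (v : 'rV[{poly K}]_n) : Prop :=
  exists u : 'rV[{poly K}]_k, v = u *m M.

Definition same_rowmod k k' n (M : 'M[{poly K}]_(k, n)) (N : 'M[{poly K}]_(k', n)) : Prop :=
  forall v, in_rowmod M v <-> in_rowmod N v.

(* P is the Popov form of A (the Popov form is unique, so this characterises it) *)
Definition popov_form_of k r n (A : 'M[{poly K}]_(k, n)) (P : 'M[{poly K}]_(r, n)) : Prop :=
  popov P /\ same_rowmod A P.

Definition prank k n (M : 'M[{poly K}]_(k, n)) : nat :=
  \rank (map_mx (@tofrac _) M).

(* C is a completion of A, where P is the Popov form of A *)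
Definition completion m n (P : 'M[{poly K}]_(m, n)) (C : 'M[{poly K}]_(n - m, n)) : Prop :=
  (forall i, msize P < rsize C i)%N /\ row_reduced (col_mx P C).

Definition msubset (s t : seq nat) : Prop :=
  forall x : nat, (count_mem x s <= count_mem x t)%N.

End PolyMat.

From HB Require Import structures.
From mathcomp Require Import all_boot all_order all_algebra fraction.
From mathcomp Require Import zify perm.
Set Implicit Arguments. Unset Strict Implicit. Unset Printing Implicit Defensive.
Import Order.TTheory GRing.Theory Num.Theory.
Local Open Scope ring_scope.

(** Row reduced matrices have the predictable degree property: [deg (u R)] is
    [max_i (deg u_i + rdeg_i R)].  Hence, for two reduced bases of the same
    module, the rows of degree at most [d] span submodules of the same rank over
    [K(x)], so their multisets of row degrees agree.  Conversely, a square matrix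
    generating the same module as a nonsingular reduced one is reduced exactly
    when the degree of its determinant is the sum of its row degrees, that is,
    when its multiset of row degrees is that of the reduced one.
    The rows of [P] have degree below [min (rdeg C)], so the rows of [Phat] of
    such degree span the module of [P] as soon as there are at most [m] of them,
    and uniqueness of Popov forms then identifies them with [P].  Both
    implications follow by comparing the degree multisets of [[P; C]], which
    generates the same module as [[A; C]], and of [Phat]. *)

Local Notation frac_mx M := (map_mx (@tofrac _) M).

Lemma enum_filter (T : finType) (A : {pred T}) : enum A = [seq x <- enum T | A x].
Proof. by rewrite enumT /enum_mem; apply: eq_filter. Qed.

Lemma count_card (T : finType) (p : pred T) : count p (enum T) = #|[pred x | p x]|.
Proof. by rewrite cardE enum_filter size_filter. Qed.

Lemma map_enum_val (T : finType) (A : {pred T}) : map enum_val (enum 'I_#|A|) = enum A.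
Proof.
have [A0|/card_gt0P[x0 _]] := posnP #|A|.
  have eA : size (enum A) = 0%N by rewrite -cardE.
  by rewrite (size0nil eA) (@size0nil _ (map _ _)) // size_map size_enum_ord.
apply: (@eq_from_nth _ x0); first by rewrite size_map size_enum_ord cardE.
move=> i; rewrite size_map size_enum_ord => lt_i.
rewrite (nth_map (Ordinal lt_i)) ?size_enum_ord // (enum_val_nth x0).
by rewrite (nth_ord_enum _ (Ordinal lt_i)).
Qed.

Lemma homo_enum_val k (S : {pred 'I_k}) : {homo (@enum_val _ S) : l l' / (l < l')%N}.
Proof.
move=> l l' lt; have x0 := enum_val l; rewrite !(enum_val_nth x0).
have sortedS : sorted (relpre val ltn) (enum S).
  rewrite enum_filter; apply: sorted_filter => [a b c|]; first exact: ltn_trans.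
  by rewrite -sorted_map val_enum_ord iota_ltn_sorted.
by apply: (sorted_ltn_nth _ x0 sortedS) => //; [exact: ltn_trans|..]; rewrite inE -cardE.
Qed.

Lemma homo_ltn_ord_eq k n (f g : 'I_k -> 'I_n) :
  {homo f : i j / (i < j)%N} -> {homo g : i j / (i < j)%N} ->
  (forall i, exists j, f i = g j) -> (forall i, exists j, g i = f j) -> f =1 g.
Proof.
move=> incf incg fg gf.
have lt_trans : transitive (fun a b : 'I_n => (a < b)%N) by move=> ? ? ?; apply: ltn_trans.
have sorted_enum : sorted (fun i j : 'I_k => (i < j)%N) (enum 'I_k).
  by rewrite -(@sorted_map _ _ val ltn) val_enum_ord iota_ltn_sorted.
suff /eq_in_map efg : map f (enum 'I_k) = map g (enum 'I_k) by move=> i; apply/efg/mem_enum.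
apply: (irr_sorted_eq lt_trans) => [a||| x]; first exact: ltnn.
- exact: homo_sorted incf _ sorted_enum.
- exact: homo_sorted incg _ sorted_enum.
apply/mapP/mapP => [[i _ ->]|[i _ ->]].
  by have [j ->] := fg i; exists j; rewrite ?mem_enum.
by have [j ->] := gf i; exists j; rewrite ?mem_enum.
Qed.

Lemma homo_ltn_ord_inj k n (f : 'I_k -> 'I_n) : {homo f : i j / (i < j)%N} -> injective f.
Proof.
move=> incf i j e; apply: val_inj; case: (ltngtP i j) => // /incf; by rewrite e ltnn.
Qed.

Lemma count_leq_split (x : nat) (s : seq nat) :
  count (leq^~ x) s = (count (fun y => y < x) s + count_mem x s)%N.
Proof.
by elim: s => //= y s ->; case: (ltngtP y x) => [lt|gt|e]; rewrite ?e ?eqxx ?ltnn ?leqnn; lia.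
Qed.

Lemma perm_eq_count_leq (s t : seq nat) :
  (forall x, count (leq^~ x) s = count (leq^~ x) t) -> perm_eq s t.
Proof.
move=> cnt; apply/allP => x _; apply/eqP.
have cnt_lt : count (fun y => y < x)%N s = count (fun y => y < x)%N t.
  by case: x => [|x]; [rewrite !(@eq_count _ _ pred0) ?count_pred0 | exact: cnt].
by have := cnt x; rewrite !count_leq_split cnt_lt; lia.
Qed.

Lemma msubset_count (s t : seq nat) (p : pred nat) :
  msubset s t -> (count p s <= count p t)%N.
Proof. by case/count_subseqP=> s' sub /seq.permP->; apply: leq_count_subseq. Qed.

Lemma msubset_perm (s t : seq nat) : msubset s t -> size s = size t -> perm_eq s t.
Proof.
case/count_subseqP=> s' sub perm_s e; have /leqifP := size_subseq_leqif sub.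
by rewrite -(perm_size perm_s) e ltnn; case: eqP => // <-.
Qed.

Lemma mul_echelon_last (F : fieldType) k n (L : 'M[F]_(k, n)) (piv : 'I_k -> 'I_n)
    (w : 'rV[F]_k) :
  {homo piv : i j / (i < j)%N} ->
  (forall i, L i (piv i) = 1) -> (forall i (c : 'I_n), (piv i < c)%N -> L i c = 0) ->
  w != 0 -> exists2 j, w 0 j != 0 &
    (w *m L) 0 (piv j) = w 0 j /\ forall c : 'I_n, (piv j < c)%N -> (w *m L) 0 c = 0.
Proof.
move=> incr L1 L0 /rV0Pn[i0 nz0].
case: (@arg_maxnP _ i0 (fun i => w 0 i != 0) val nz0) => j nzj jmax.
have w0 (i : 'I_k) : (j < i)%N -> w 0 i = 0.
  by move=> lt; apply/eqP; apply: contraTT lt => /jmax; rewrite -leqNgt.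
exists j => //; split=> [|c lt_c].
  rewrite mxE (bigD1 j) //= L1 mulr1 big1 ?addr0 // => i /negPf ne.
  have [lt|gt|eq] := ltngtP i j; last by move: ne; rewrite (val_inj eq) eqxx.
    by rewrite L0 ?mulr0 // incr.
  by rewrite w0 ?mul0r.
rewrite mxE big1 // => i _; have [lt|] := ltnP j i; first by rewrite w0 ?mul0r.
rewrite leq_eqVlt => /predU1P[e|lt]; first by rewrite L0 ?mulr0 // (val_inj e).
by rewrite L0 ?mulr0 //; apply: ltn_trans lt_c; apply: incr.
Qed.

Lemma row_free_rowsub (F : fieldType) k c n (f : 'I_c -> 'I_k) (A : 'M[F]_(k, n)) :
  injective f -> row_free A -> row_free (rowsub f A).
Proof.
move=> injf /row_freeP[B AB]; apply/row_freeP.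
exists (B *m (rowsub f (1%:M : 'M[F]_k))^T).
rewrite mulmxA rowsubE -(mulmxA _ A) AB mulmx1 -rowsubE.
by apply/matrixP => i j; rewrite !mxE (inj_eq injf) eq_sym.
Qed.

Section PolyMatrices.
Variable K : fieldType.
Implicit Types p q : {poly K}.

Lemma coefM_top p q (a b : nat) :
  (size p <= a.+1)%N -> (size q <= b.+1)%N -> (p * q)`_(a + b) = p`_a * q`_b.
Proof.
move=> sp sq; rewrite coefM (bigD1 (Ordinal (leq_addr b a : (a < (a + b).+1)%N))) //=.
rewrite addKn big1 ?addr0 // => i /eqP ne.
have [lt|ge] := ltnP i a.
  rewrite [q`__]nth_default ?mulr0 //; apply: leq_trans sq _.
  have := ltn_ord i; lia.
rewrite [p`__]nth_default ?mul0r //; apply: leq_trans sp _.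
have : (nat_of_ord i <> a) by move=> e; apply: ne; apply: val_inj.
lia.
Qed.

Lemma prod_coef_top (I : Type) (r : seq I) (F : I -> {poly K}) (d : I -> nat) :
  (forall i, size (F i) <= (d i).+1)%N ->
  (size (\prod_(i <- r) F i)%R <= (\sum_(i <- r) d i).+1)%N /\
  (\prod_(i <- r) F i)`_(\sum_(i <- r) d i)%N = \prod_(i <- r) (F i)`_(d i).
Proof.
move=> sF; elim: r => [|x r [IHs IHc]]; first by rewrite !big_nil size_poly1 coef1.
rewrite !big_cons; split; last by rewrite coefM_top // IHc.
apply: leq_trans (size_mul_leq _ _) _; have := sF x; lia.
Qed.

Lemma det_coef_top k (M : 'M[{poly K}]_k) (d : 'I_k -> nat) :
  (forall i j, size (M i j) <= (d i).+1)%N ->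
  (size (\det M) <= (\sum_i d i).+1)%N /\
  (\det M)`_(\sum_i d i)%N = \det (\matrix_(i, j) (M i j)`_(d i)).
Proof.
move=> sM; have top (s : 'S_k) :=
  @prod_coef_top _ (index_enum 'I_k) (fun i => M i (s i)) d (fun i => sM i (s i)).
split.
  apply/leq_sizeP => j hj; rewrite coef_sum big1 // => s _.
  rewrite mulr_sign; case: ifP => _; rewrite ?coefN nth_default ?oppr0 //;
  by apply: leq_trans hj; case: (top s).
rewrite coef_sum; apply: eq_bigr => s _; rewrite !mulr_sign.
by case: ifP => _; rewrite ?coefN (proj2 (top s)); [congr (- _)|];
  apply: eq_bigr => i _; rewrite mxE.
Qed.

Lemma size_leq_coef0 p N : (size p <= N.+1)%N -> p`_N = 0 -> (size p <= N)%N.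
Proof.
move=> le pN; rewrite leqNgt; apply/negP => lt.
have e : size p = N.+1 by apply/eqP; rewrite eqn_leq le lt.
have /eqP : lead_coef p = 0 by rewrite lead_coefE e.
by rewrite lead_coef_eq0 => /eqP p0; move: e; rewrite p0 size_poly0.
Qed.

Lemma size_sub_monic p q :
  p \is monic -> q \is monic -> size p = size q -> (size (p - q)%R < size p)%N.
Proof.
move=> mp mq e; have sp : (0 < size p)%N by rewrite size_poly_gt0 monic_neq0.
rewrite -(prednK sp) ltnS; apply: size_leq_coef0.
  by rewrite prednK // (leq_trans (size_add _ _)) // size_opp -e maxnn.
by rewrite coefB {2}e -!lead_coefE (monicP mp) (monicP mq) subrr.
Qed.

Lemma size_le_rsize k n (M : 'M[{poly K}]_(k, n)) i j : (size (M i j) <= rsize M i)%N.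
Proof. exact: leq_bigmax. Qed.

Lemma rsize_row k n (M : 'M[{poly K}]_(k, n)) i : rsize M i = rsize (row i M) 0.
Proof. by apply: eq_bigr => j _; rewrite mxE. Qed.

Lemma rsize_eq0 n (v : 'rV[{poly K}]_n) : (rsize v 0 == 0%N) = (v == 0).
Proof.
apply/idP/eqP => [v0|->]; last first.
  by rewrite -leqn0; apply/bigmax_leqP => j _; rewrite mxE size_poly0.
apply/rowP => j; apply/eqP; rewrite mxE -size_poly_eq0 -leqn0.
by have := size_le_rsize v 0 j; rewrite (eqP v0).
Qed.

Lemma rsize_rowsub k c n (f : 'I_c -> 'I_k) (M : 'M[{poly K}]_(k, n)) i :
  rsize (rowsub f M) i = rsize M (f i).
Proof. by apply: eq_bigr => j _; rewrite mxE. Qed.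

Lemma rsize_col_mx_up m k n (P : 'M[{poly K}]_(m, n)) (C : 'M[{poly K}]_(k, n)) i :
  rsize (col_mx P C) (lshift k i) = rsize P i.
Proof. by apply: eq_bigr => j _; rewrite col_mxEu. Qed.

Lemma rsize_col_mx_down m k n (P : 'M[{poly K}]_(m, n)) (C : 'M[{poly K}]_(k, n)) i :
  rsize (col_mx P C) (rshift m i) = rsize C i.
Proof. by apply: eq_bigr => j _; rewrite col_mxEd. Qed.

Lemma size_rdegs k n (M : 'M[{poly K}]_(k, n)) : size (rdegs M) = k.
Proof. by rewrite size_map size_enum_ord. Qed.

Lemma count_rdegs k n (M : 'M[{poly K}]_(k, n)) (p : pred nat) :
  count p (rdegs M) = #|[pred i | p (rsize M i)]|.
Proof. by rewrite count_map count_card. Qed.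

Lemma sum_rdegs k n (M : 'M[{poly K}]_(k, n)) (F : nat -> nat) :
  (\sum_(x <- rdegs M) F x = \sum_i F (rsize M i))%N.
Proof. by rewrite big_map big_enum. Qed.

Lemma perm_rdegs_col_mx m k n (P : 'M[{poly K}]_(m, n)) (C : 'M[{poly K}]_(k, n)) :
  perm_eq (rdegs (col_mx P C)) (rdegs P ++ rdegs C).
Proof.
apply/seq.permP => p; rewrite count_cat !count_rdegs -!sum1_card big_split_ord /=.
by congr (_ + _)%N; apply: eq_bigl => i; rewrite !inE ?rsize_col_mx_up ?rsize_col_mx_down.
Qed.

Lemma unit_lmatE k (M : 'M[{poly K}]_k) :
  (lmat M \in unitmx) = (size (\det M) == (\sum_i (rsize M i).-1).+1)%N.
Proof.
have [sz top] : (size (\det M) <= (\sum_i (rsize M i).-1).+1)%N /\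
    (\det M)`_(\sum_i (rsize M i).-1)%N = \det (lmat M).
  by apply: det_coef_top => i j; rewrite (leq_trans (size_le_rsize M i j)) ?leqSpred.
rewrite unitmxE unitfE -top; apply/idP/eqP => [nz|e].
  apply/eqP; rewrite eqn_leq sz ltnNge; apply: contra nz => /leq_sizeP -> //.
have -> : (\sum_i (rsize M i).-1)%N = (size (\det M)).-1 by rewrite e.
by rewrite -lead_coefE lead_coef_eq0 -size_poly_gt0 e.
Qed.

Lemma row_reducedP k n (R : 'M[{poly K}]_(k, n)) :
  row_reduced R <-> no_zero_row R /\ row_free (lmat R).
Proof.
split=> [[_ [nzR /eqP rfR]] // | [nzR rfR]].
by split; [rewrite -(eqP rfR) rank_leq_col | split=> //; apply/eqP].
Qed.

(** * Predictable degree property *)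

Section PredictableDegree.
Variables (k n : nat) (u : 'rV[{poly K}]_k) (R : 'M[{poly K}]_(k, n)).

(* [comb_size] is [max_i (deg u_i + deg R_i) + 2]: sizes are degrees plus one. *)
Definition comb_size : nat :=
  (\max_(i < k | u 0%R i != 0%R) (size (u 0%R i) + rsize R i))%N.

(* The coefficients of the [u_i] that contribute to the top-degree part of [u R]. *)
Definition comb_lead : 'rV[K]_k := \row_i (u 0 i)`_(comb_size.-1 - rsize R i).

Lemma comb_size_ge i : u 0 i != 0 -> (size (u 0%R i) + rsize R i <= comb_size)%N.
Proof. by move=> nz; exact: leq_bigmax_cond. Qed.

Lemma comb_size_argmax :
  u != 0 -> exists2 i, u 0 i != 0 & (size (u 0%R i) + rsize R i)%N = comb_size.
Proof.
case/rV0Pn=> i0 nz0.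
by exists [arg max_(i > i0 | u 0%R i != 0%R) (size (u 0%R i) + rsize R i)%N];
  [case: arg_maxnP | rewrite /comb_size (bigop.bigmax_eq_arg i0 nz0)].
Qed.

Lemma rsize_mul_le : (rsize (u *m R) 0%R <= comb_size.-1)%N.
Proof.
apply/bigmax_leqP => j _; rewrite mxE; apply/leq_sizeP => l hl.
rewrite coef_sum big1 // => i _.
have [->|nz] := eqVneq (u 0 i) 0; first by rewrite mul0r coef0.
rewrite nth_default //; apply: leq_trans (size_mul_leq _ _) _.
have := size_le_rsize R i j; have := comb_size_ge nz.
set a := size (u 0 i); set b := size (R i j); lia.
Qed.

Hypothesis nzR : no_zero_row R.

Lemma comb_size_ge2 : u != 0 -> (2 <= comb_size)%N.
Proof.
case/comb_size_argmax=> i nz <-; have := nzR i; rewrite -size_poly_gt0 in nz; lia.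
Qed.

Lemma coef_mul_top j : ((u *m R) 0 j)`_(comb_size.-2) = (comb_lead *m lmat R) 0 j.
Proof.
rewrite !mxE coef_sum; apply: eq_bigr => i _; rewrite !mxE.
have [->|nz] := eqVneq (u 0 i) 0; first by rewrite mul0r !coef0 mul0r.
have := size_le_rsize R i j; have := comb_size_ge nz; have := nzR i.
have : (0 < size (u 0%R i))%N by rewrite size_poly_gt0.
set a := size (u 0 i); set b := size (R i j) => *.
have -> : comb_size.-2 = ((comb_size.-1 - rsize R i) + (rsize R i).-1)%N by lia.
by rewrite coefM_top -/a -/b //; lia.
Qed.

Lemma comb_lead_lt i : (size (u 0%R i) + rsize R i < comb_size)%N -> comb_lead 0 i = 0.
Proof.
by move=> lt; rewrite mxE nth_default //; move: lt; set a := size (u 0 i); lia.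
Qed.

Lemma comb_lead_eq i : u 0 i != 0 -> (size (u 0%R i) + rsize R i)%N = comb_size ->
  comb_lead 0 i = lead_coef (u 0 i).
Proof.
move=> nz e; rewrite mxE /lead_coef; congr (_`_ _).
by have := nzR i; move: e; set a := size (u 0 i); lia.
Qed.

Lemma size_mul_top j : ((u *m R) 0 j)`_(comb_size.-2) != 0 ->
  (comb_size.-1 <= size ((u *m R) 0%R j))%N.
Proof.
have [->|nz] := eqVneq u 0; first by rewrite mul0mx mxE coef0 eqxx.
move=> top; have := comb_size_ge2 nz.
have : (comb_size.-2 < size ((u *m R) 0%R j))%N.
  by rewrite ltnNge; apply: contra top => /leq_sizeP ->.
lia.
Qed.

End PredictableDegree.

Lemma rsize_mul_reduced k n (R : 'M[{poly K}]_(k, n)) (u : 'rV_k) :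
  row_reduced R -> rsize (u *m R) 0 = (comb_size u R).-1.
Proof.
case/row_reducedP=> nzR rfR; apply/eqP; rewrite eqn_leq rsize_mul_le /=.
have [->|nz] := eqVneq u 0.
  by rewrite /comb_size big1 // => i; rewrite mxE eqxx.
have [i0 nz0 e0] := comb_size_argmax R nz.
have : comb_lead u R *m lmat R != 0.
  rewrite mulmx_free_eq0 //; apply/rV0Pn; exists i0.
  by rewrite (comb_lead_eq nzR nz0 e0) lead_coef_eq0.
case/rV0Pn=> j; rewrite -coef_mul_top // => /size_mul_top top.
exact: leq_trans (top nzR) (size_le_rsize _ _ _).
Qed.

Lemma rsize_le_mul_reduced k n (R : 'M[{poly K}]_(k, n)) (u : 'rV_k) s i :
  row_reduced R -> (rsize (u *m R) 0%R <= s)%N -> u 0 i != 0 -> (rsize R i <= s)%N.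
Proof.
move=> rR; rewrite rsize_mul_reduced // => le nz; have := comb_size_ge R nz.
rewrite -size_poly_gt0 in nz; move: nz le; set a := size (u 0 i); lia.
Qed.

(** * Popov forms *)

Section PopovPivots.
Variables (k n : nat) (P : 'M[{poly K}]_(k, n)) (piv : 'I_k -> 'I_n).
Hypotheses (nzP : no_zero_row P) (pivP : forall i, is_pivot P i (piv i))
  (incr : {homo piv : i j / (i < j)%N}) (monP : forall i, P i (piv i) \is monic).

Lemma lmat_pivot i : lmat P i (piv i) = 1.
Proof. by rewrite mxE -(pivP i).1; apply/monicP. Qed.

Lemma lmat_gt_pivot i (c : 'I_n) : (piv i < c)%N -> lmat P i c = 0.
Proof.
move=> lt; rewrite mxE nth_default //; have := (pivP i).2 c lt; have := nzP i.
set r := rsize P i; set s := size (P i c); lia.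
Qed.

Lemma popov_pivots_reduced : row_reduced P.
Proof.
apply/row_reducedP; split=> //; apply/inj_row_free => w wP0; apply/eqP.
apply: contraT => /(mul_echelon_last incr lmat_pivot lmat_gt_pivot)[j nzj [wj _]].
by move: nzj; rewrite -wj wP0 mxE eqxx.
Qed.

Lemma mul_popov_pivot (u : 'rV_k) : u != 0 ->
  exists2 j, u 0 j != 0 & is_pivot (u *m P) 0 (piv j) /\
    rsize (u *m P) 0 = (size (u 0%R j) + rsize P j).-1%N.
Proof.
move=> nzu; have rsz := rsize_mul_reduced u popov_pivots_reduced.
have [i0 nz0 e0] := comb_size_argmax P nzu.
have : comb_lead u P != 0.
  by apply/rV0Pn; exists i0; rewrite (comb_lead_eq nzP nz0 e0) lead_coef_eq0.
case/(mul_echelon_last incr lmat_pivot lmat_gt_pivot)=> j nzj [top gt_top].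
have nzuj : u 0 j != 0 by apply: contraNneq nzj => uj0; rewrite mxE uj0 coef0.
have ej : (size (u 0%R j) + rsize P j)%N = comb_size u P.
  apply/eqP; rewrite eqn_leq comb_size_ge //= leqNgt.
  by apply: contra nzj => /comb_lead_lt ->.
have ge2 := comb_size_ge2 nzP nzu; exists j => //; split; last by rewrite rsz ej.
split=> [|c lt_c].
  apply/eqP; rewrite eqn_leq size_le_rsize rsz /= size_mul_top //.
  by rewrite coef_mul_top // top.
have : ((u *m P) 0 c)`_((comb_size u P).-2) = 0 by rewrite coef_mul_top // gt_top.
have e1 : (comb_size u P).-1 = (comb_size u P).-2.+1 by lia.
rewrite rsz e1 ltnS => /(size_leq_coef0 _)-> //.
by rewrite -e1 -rsz size_le_rsize.
Qed.
End PopovPivots.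

Lemma popov_row_reduced k n (P : 'M[{poly K}]_(k, n)) : popov P -> row_reduced P.
Proof. by case=> nzP [piv [pivP incr monP _]]; apply: popov_pivots_reduced pivP _ _. Qed.

Lemma is_pivot_uniq k n (M : 'M[{poly K}]_(k, n)) i c1 c2 :
  is_pivot M i c1 -> is_pivot M i c2 -> c1 = c2.
Proof.
move=> [e1 lt1] [e2 lt2]; apply: val_inj; case: (ltngtP c1 c2) => // lt.
  by have := lt1 _ lt; rewrite e2 ltnn.
by have := lt2 _ lt; rewrite e1 ltnn.
Qed.

Lemma is_pivot_row k n (M : 'M[{poly K}]_(k, n)) i c :
  is_pivot M i c -> is_pivot (row i M) 0 c.
Proof. by case=> e lt; split=> [|c' /lt]; rewrite mxE -rsize_row. Qed.

Lemma rowmod_row k n (M : 'M[{poly K}]_(k, n)) i : in_rowmod M (row i M).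
Proof. by exists (delta_mx 0 i); rewrite -rowE. Qed.

Lemma rowmod_sub k n (M : 'M[{poly K}]_(k, n)) v w :
  in_rowmod M v -> in_rowmod M w -> in_rowmod M (v - w).
Proof. by case=> u1 -> [u2 ->]; exists (u1 - u2); rewrite mulmxBl. Qed.

Lemma popov_pivot_sub k1 k2 n (P1 : 'M[{poly K}]_(k1, n)) (P2 : 'M[{poly K}]_(k2, n))
    piv1 piv2 :
  no_zero_row P1 -> (forall i, is_pivot P1 i (piv1 i)) ->
  no_zero_row P2 -> (forall i, is_pivot P2 i (piv2 i)) -> {homo piv2 : i j / (i < j)%N} ->
  (forall i, P2 i (piv2 i) \is monic) ->
  (forall v, in_rowmod P1 v -> in_rowmod P2 v) ->
  forall i, exists j, piv1 i = piv2 j /\ (rsize P2 j <= rsize P1 i)%N.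
Proof.
move=> nz1 piv1P nz2 piv2P incr2 mon2 sub i.
have [u eu] := sub _ (rowmod_row P1 i).
have nzu : u != 0.
  apply: contraTneq (nz1 i) => u0; rewrite rsize_row eu u0 mul0mx.
  by have /eqP-> : rsize (0 : 'rV[{poly K}]_n) 0 == 0%N by rewrite rsize_eq0.
have [j nzuj [pivj rszj]] := mul_popov_pivot nz2 piv2P incr2 mon2 nzu.
rewrite -eu in pivj rszj; exists j; split.
  exact: is_pivot_uniq (is_pivot_row (piv1P i)) pivj.
by rewrite [rsize P1 i]rsize_row rszj; rewrite -size_poly_gt0 in nzuj; move: nzuj; set a := size _; lia.
Qed.

Lemma popov_unique k n (P1 P2 : 'M[{poly K}]_(k, n)) :
  popov P1 -> popov P2 -> same_rowmod P1 P2 -> P1 = P2.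
Proof.
case=> nz1 [piv1 [piv1P incr1 mon1 dom1]] [nz2 [piv2 [piv2P incr2 mon2 dom2]]] same.
have sub12 := popov_pivot_sub nz1 piv1P nz2 piv2P incr2 mon2 (fun v => (same v).1).
have sub21 := popov_pivot_sub nz2 piv2P nz1 piv1P incr1 mon1 (fun v => (same v).2).
have epiv : piv1 =1 piv2.
  apply: homo_ltn_ord_eq => // i.
    by have [j [e _]] := sub12 i; exists j.
  by have [j [e _]] := sub21 i; exists j.
have ersize i : rsize P1 i = rsize P2 i.
  have [j [e1 le1]] := sub12 i; have [j' [e2 le2]] := sub21 i.
  have ej : j = i by apply: (homo_ltn_ord_inj incr2); rewrite -e1 epiv.
  have ej' : j' = i by apply: (homo_ltn_ord_inj incr1); rewrite -e2 epiv.
  by apply/eqP; rewrite eqn_leq; rewrite ej in le1; rewrite ej' in le2; rewrite le1 le2.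
apply/row_matrixP => i; apply/eqP; rewrite -subr_eq0; set v := row i P1 - row i P2.
have [u eu] : in_rowmod P2 v.
  by apply: rowmod_sub; [apply/(same _).1|]; apply: rowmod_row.
apply: contraT => nzv; have nzu : u != 0 by apply: contraNneq nzv => u0; rewrite eu u0 mul0mx.
have [j nzuj [[szj _] rszj]] := mul_popov_pivot nz2 piv2P incr2 mon2 nzu.
rewrite -eu in szj rszj.
have : (rsize P2 j <= size (v 0%R (piv2 j)))%N.
  by rewrite szj rszj; rewrite -size_poly_gt0 in nzuj; move: nzuj; set a := size _; lia.
suff lt : (size (v 0%R (piv2 j)) < rsize P2 j)%N by rewrite leqNgt lt.
rewrite !mxE -epiv.
have [<-|nij] := eqVneq i j.
  have e : size (P1 i (piv1 i)) = size (P2 i (piv1 i)).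
    by rewrite (piv1P i).1 epiv (piv2P i).1 ersize.
  rewrite -ersize -(piv1P i).1; apply: size_sub_monic e => //; rewrite epiv; exact: mon2.
apply: leq_ltn_trans (size_add _ _) _; rewrite size_opp gtn_max.
have := dom1 j i nij; have := dom2 j i nij.
by rewrite -epiv (piv1P j).1 epiv (piv2P j).1 ersize => -> ->.
Qed.

(** * Row modules and ranks over K(x) *)

Lemma rowmod_mulmx k k' n (M : 'M[{poly K}]_(k, n)) (N : 'M[{poly K}]_(k', n)) :
  (forall i, in_rowmod N (row i M)) -> exists U, M = U *m N.
Proof.
move=> rowsM; have [U MU] := fin_all_exists rowsM.
by exists (\matrix_(i < k) U i); apply/row_matrixP => i; rewrite row_mul rowK.
Qed.

Lemma rowmod_rows k k' n (M : 'M[{poly K}]_(k, n)) (N : 'M[{poly K}]_(k', n)) :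
  (forall i, in_rowmod N (row i M)) -> forall v, in_rowmod M v -> in_rowmod N v.
Proof.
by case/rowmod_mulmx=> U -> v [u ->]; exists (u *m U); rewrite mulmxA.
Qed.

Lemma rowmod_submx k k' n (M : 'M[{poly K}]_(k, n)) (N : 'M[{poly K}]_(k', n)) :
  (forall i, in_rowmod N (row i M)) -> (frac_mx M <= frac_mx N)%MS.
Proof.
move=> rowsM; apply/row_subP => i; rewrite -map_row.
by have [u ->] := rowsM i; rewrite map_mxM submxMl.
Qed.

Lemma prank_same_rowmod k k' n (M : 'M[{poly K}]_(k, n)) (N : 'M[{poly K}]_(k', n)) :
  same_rowmod M N -> prank M = prank N.
Proof.
move=> same; apply/eqmx_rank/andP.
by split; apply: rowmod_submx => i; apply/same/rowmod_row.
Qed.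

(* A right inverse [B] of [lmat R] over [K] makes the top coefficient of
   [\det (R *m B)] equal to [\det 1]. *)
Lemma row_reduced_prank k n (R : 'M[{poly K}]_(k, n)) : row_reduced R -> prank R = k.
Proof.
case/row_reducedP=> nzR /row_freeP[B lmatB].
pose X := R *m map_mx polyC B.
have sX i j : (size (X i j) <= (rsize R i).-1.+1)%N.
  apply/leq_sizeP => l lt_l; rewrite mxE coef_sum big1 // => c _.
  rewrite mxE coefMC nth_default ?mul0r //; apply: leq_trans _ lt_l.
  by have := size_le_rsize R i c; have := nzR i; set r := rsize R i; set s := size (R i c); lia.
have [_ topX] := det_coef_top sX.
have : \matrix_(i, j) (X i j)`_(rsize R i).-1 = 1%:M.
  rewrite -lmatB; apply/matrixP => i j; rewrite !mxE coef_sum.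
  by apply: eq_bigr => c _; rewrite !mxE coefMC.
move=> lmatX; rewrite lmatX det1 in topX.
have unitX : frac_mx X \in unitmx.
  rewrite unitmxE det_map_mx unitfE tofrac_eq0; apply: contra_eq_neq topX => ->.
  by rewrite coef0 eq_sym oner_neq0.
apply/eqP; rewrite eqn_leq rank_leq_row -{1}(mxrank_unit unitX) map_mxM.
exact: mxrankM_maxl.
Qed.

Lemma row_reduced_rowsub k c n (f : 'I_c -> 'I_k) (R : 'M[{poly K}]_(k, n)) :
  injective f -> row_reduced R -> row_reduced (rowsub f R).
Proof.
move=> injf /row_reducedP[nzR rfR]; apply/row_reducedP.
split=> [i|]; first by rewrite rsize_rowsub.
have -> : lmat (rowsub f R) = rowsub f (lmat R).
  by apply/matrixP => i j; rewrite !mxE rsize_rowsub.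
exact: row_free_rowsub.
Qed.

Lemma mul_rowsub_enum k n (S : {pred 'I_k}) (R : 'M[{poly K}]_(k, n)) (u : 'rV_k) :
  (forall i, u 0 i != 0 -> i \in S) ->
  u *m R = (\row_l u 0 (enum_val l)) *m rowsub (@enum_val _ S) R.
Proof.
move=> suppu; rewrite !mulmx_sum_row (bigID (mem S)) /= [X in _ + X]big1 ?addr0.
  by rewrite big_enum_val; apply: eq_bigr => l _; rewrite row_rowsub mxE.
move=> i notS; have /eqP-> : u 0 i == 0 by apply: contraNT notS; apply: suppu.
by rewrite scale0r.
Qed.

Lemma rowmod_col_mx_sub m k n (A P : 'M[{poly K}]_(m, n)) (C : 'M[{poly K}]_(k, n)) :
  (forall v, in_rowmod A v -> in_rowmod P v) ->
  forall v, in_rowmod (col_mx A C) v -> in_rowmod (col_mx P C) v.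
Proof.
move=> sub v [u ->]; rewrite -[u]hsubmxK mul_row_col.
have [w ->] := sub _ (ex_intro _ (lsubmx u) erefl).
by exists (row_mx w (rsubmx u)); rewrite mul_row_col.
Qed.

Lemma rowmod_col_mx_upper m k n (P : 'M[{poly K}]_(m, n)) (C : 'M[{poly K}]_(k, n)) v :
  row_free (frac_mx (col_mx P C)) -> in_rowmod (col_mx P C) v ->
  (frac_mx v <= frac_mx P)%MS -> in_rowmod P v.
Proof.
move=> rfQ [u ->] /submxP[z ez]; rewrite -[u]hsubmxK mul_row_col in ez *.
have : row_mx (frac_mx (lsubmx u) - z) (frac_mx (rsubmx u)) *m frac_mx (col_mx P C) = 0.
  by rewrite map_col_mx mul_row_col mulmxBl -!map_mxM addrAC -map_mxD ez subrr.
move/eqP; rewrite mulmx_free_eq0 // row_mx_eq0 => /andP[_ /eqP/matrixP u2].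
have -> : rsubmx u = 0.
  by apply/matrixP => i j; have := u2 i j; rewrite !mxE => /eqP; rewrite tofrac_eq0 => /eqP.
by rewrite mul0mx addr0; exists (lsubmx u).
Qed.

Lemma popov_rowsub k c n (f : 'I_c -> 'I_k) (X : 'M[{poly K}]_(k, n)) :
  {homo f : l l' / (l < l')%N} -> popov X -> popov (rowsub f X).
Proof.
move=> incf [nzX [piv [pivX incr monX domX]]]; split=> [l|]; first by rewrite rsize_rowsub.
exists (piv \o f); split=> [l|l l' /incf/incr //|l|l l' ne]; rewrite ?mxE //.
  by case: (pivX (f l)) => e lt; split=> [|j /lt]; rewrite mxE rsize_rowsub.
by apply: domX; apply: contra ne => /eqP/(homo_ltn_ord_inj incf)->.
Qed.

Lemma map_row_filter k n (S : {pred 'I_k}) (X : 'M[{poly K}]_(k, n)) :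
  [seq row i X | i <- enum 'I_k & S i] =
  [seq row l (rowsub (@enum_val _ S) X) | l <- enum 'I_#|S|].
Proof.
rewrite -enum_filter -map_enum_val -map_comp; apply: eq_map => l /=.
by rewrite row_rowsub.
Qed.

Lemma popov_unique_rows c k n (X : 'M[{poly K}]_(c, n)) (Y : 'M[{poly K}]_(k, n)) :
  popov X -> popov Y -> same_rowmod X Y ->
  [seq row i X | i <- enum 'I_c] = [seq row i Y | i <- enum 'I_k].
Proof.
move=> pX pY same; have ck : c = k.
  rewrite -(row_reduced_prank (popov_row_reduced pX)) (prank_same_rowmod same).
  exact/row_reduced_prank/popov_row_reduced.
by case: k / ck Y pY same => Y pY same; rewrite (popov_unique pX pY same).
Qed.

(** * Row degrees of reduced bases *)

Lemma card_rsize_leq k k' n (R : 'M[{poly K}]_(k, n)) (R' : 'M[{poly K}]_(k', n)) s :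
  row_reduced R -> row_reduced R' -> (forall v, in_rowmod R v -> in_rowmod R' v) ->
  (#|[pred i | rsize R i <= s]| <= #|[pred i | rsize R' i <= s]|)%N.
Proof.
move=> rR rR' sub; set S := [pred i | _]; set S' := [pred i | _].
have <- := row_reduced_prank (row_reduced_rowsub (@enum_val_inj _ S) rR).
apply: leq_trans (rank_leq_row (frac_mx (rowsub (@enum_val _ S') R'))).
apply/mxrankS/rowmod_submx => l; rewrite row_rowsub.
have [u eu] := sub _ (rowmod_row R (enum_val l)).
rewrite eu (mul_rowsub_enum (S := S')); first by exists (\row_l u 0 (enum_val l)).
move=> i nzu; rewrite inE; apply: rsize_le_mul_reduced rR' _ nzu.
by rewrite -eu -rsize_row; have := enum_valP l; rewrite inE.
Qed.

Lemma perm_rdegs_row_reduced k k' n (R : 'M[{poly K}]_(k, n)) (R' : 'M[{poly K}]_(k', n)) :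
  row_reduced R -> row_reduced R' -> same_rowmod R R' -> perm_eq (rdegs R) (rdegs R').
Proof.
move=> rR rR' same; apply: perm_eq_count_leq => s; rewrite !count_rdegs.
by apply/eqP; rewrite eqn_leq !card_rsize_leq // => v /same.
Qed.

Lemma size_det_same_rowmod n (X Y : 'M[{poly K}]_n) :
  same_rowmod X Y -> \det Y != 0 -> size (\det X) = size (\det Y).
Proof.
move=> same detY0.
have [V XV] : exists V, X = V *m Y by apply: rowmod_mulmx => i; apply/same/rowmod_row.
have [W YW] : exists W, Y = W *m X by apply: rowmod_mulmx => i; apply/same/rowmod_row.
have : \det V \is a GRing.unit.
  apply/unitrPr; exists (\det W); apply: (mulIf detY0).
  by rewrite mul1r [\det V * _]mulrC -!det_mulmx -mulmxA -XV -YW.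
rewrite poly_unitE => /andP[/eqP szV _].
by rewrite XV det_mulmx size_mul ?szV // -size_poly_gt0 szV.
Qed.

Lemma row_reduced_perm_rdegs n (X Y : 'M[{poly K}]_n) :
  same_rowmod X Y -> row_reduced Y -> perm_eq (rdegs X) (rdegs Y) -> row_reduced X.
Proof.
move=> same rY permXY; have /row_reducedP[nzY rfY] := rY.
have nzX : no_zero_row X.
  move=> i; have : rsize X i \in rdegs Y by rewrite -(perm_mem permXY) map_f ?mem_enum.
  by case/mapP=> j _ ->.
apply/row_reducedP; split=> //; rewrite row_free_unit unit_lmatE.
have sumXY : (\sum_i (rsize X i).-1 = \sum_i (rsize Y i).-1)%N.
  by rewrite -!sum_rdegs (perm_big _ permXY).
have szY : size (\det Y) = (\sum_i (rsize Y i).-1).+1.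
  by apply/eqP; rewrite -unit_lmatE -row_free_unit.
by rewrite (size_det_same_rowmod same) ?szY ?sumXY // -size_poly_gt0 szY.
Qed.

Section CastRows.
Variables (k k' n : nat) (e : k = k') (X : 'M[{poly K}]_(k, n)).

Lemma in_rowmod_castmx v : in_rowmod (castmx (e, erefl n) X) v <-> in_rowmod X v.
Proof. by case: k' / e; rewrite castmx_id. Qed.

Lemma rdegs_castmx : rdegs (castmx (e, erefl n) X) = rdegs X.
Proof. by case: k' / e; rewrite castmx_id. Qed.

Lemma row_reduced_castmx : row_reduced (castmx (e, erefl n) X) <-> row_reduced X.
Proof. by case: k' / e; rewrite castmx_id. Qed.

End CastRows.

Definition lt_rsizes k n (C : 'M[{poly K}]_(k, n)) (x : nat) : bool :=
  [forall j, x < rsize C j]%N.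

Section Completion.
Variables (m k N n : nat) (P : 'M[{poly K}]_(m, n)) (C : 'M[{poly K}]_(k, n))
  (Ph : 'M[{poly K}]_(N, n)).
Hypotheses (popP : popov P) (popPh : popov Ph) (samePh : same_rowmod (col_mx P C) Ph)
  (rfPC : row_free (frac_mx (col_mx P C))) (ltPC : forall i j, (rsize P i < rsize C j)%N).

Let low := [pred i | lt_rsizes C (rsize Ph i)].
Let Plow := rowsub (@enum_val _ low) Ph.

Lemma nrows_Ph : N = (m + k)%N.
Proof.
rewrite -(row_reduced_prank (popov_row_reduced popPh)) -(prank_same_rowmod samePh).
exact/eqP.
Qed.

Lemma rowmod_P_low v : in_rowmod P v -> in_rowmod Plow v.
Proof.
apply: rowmod_rows => i.
have [u eu] : in_rowmod Ph (row i P).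
  by apply/samePh; exists (row_mx (delta_mx 0 i) 0); rewrite mul_row_col mul0mx addr0 -rowE.
rewrite eu (mul_rowsub_enum (S := low)); first by exists (\row_l u 0 (enum_val l)).
move=> l nzu; rewrite inE; apply/forallP => j; apply: leq_ltn_trans (ltPC i j).
by apply: rsize_le_mul_reduced (popov_row_reduced popPh) _ nzu; rewrite -eu -rsize_row.
Qed.

Lemma card_low_ge : (m <= #|low|)%N.
Proof.
rewrite -{1}(row_reduced_prank (popov_row_reduced popP)).
apply: leq_trans (rank_leq_row (frac_mx Plow)).
by apply/mxrankS/rowmod_submx => i; apply/rowmod_P_low/rowmod_row.
Qed.

Lemma low_rows_eq : (#|low| <= m)%N ->
  [seq row i Ph | i <- enum 'I_N & low i] = [seq row i P | i <- enum 'I_m].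
Proof.
move=> card_le; rewrite map_row_filter; apply: popov_unique_rows => //.
  exact/popov_rowsub/popPh/homo_enum_val.
move=> v; split; last exact: rowmod_P_low.
have PPlow : (frac_mx P <= frac_mx Plow)%MS.
  by apply: rowmod_submx => i; apply/rowmod_P_low/rowmod_row.
have /andP[_ PlowP] : (frac_mx P == frac_mx Plow)%MS.
  rewrite -(mxrank_leqif_eq PPlow).2 eqn_leq mxrankS //=.
  apply: leq_trans (rank_leq_row _) (leq_trans card_le _).
  by rewrite -/(prank P) (row_reduced_prank (popov_row_reduced popP)).
apply: rowmod_rows => l; apply: rowmod_col_mx_upper rfPC _ _.
  by apply/samePh; rewrite row_rowsub; apply: rowmod_row.
by rewrite map_row; apply: submx_trans PlowP; apply: row_sub.
Qed.

Lemma count_lt_rsizes_col_mx : count (lt_rsizes C) (rdegs (col_mx P C)) = m.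
Proof.
rewrite (seq.permP (perm_rdegs_col_mx P C)) count_cat !count_rdegs.
rewrite (eq_card0 (A := [pred j | lt_rsizes C (rsize C j)])) ?addn0.
  by rewrite -[RHS]card_ord; apply: eq_card => i; rewrite !inE; apply/forallP/ltPC.
by move=> j; rewrite !inE; apply/negbTE/forallPn; exists j; rewrite ltnn.
Qed.

Lemma perm_rdegs_card_low :
  perm_eq (rdegs (col_mx P C)) (rdegs Ph) -> #|low| = m.
Proof.
by move=> /seq.permP/(_ (lt_rsizes C)); rewrite count_lt_rsizes_col_mx count_rdegs.
Qed.

Lemma all_rdegs_not_lt_rsizes : all (predC (lt_rsizes C)) (rdegs C).
Proof. by apply/allP => _ /mapP[j _ ->]; apply/forallPn; exists j; rewrite ltnn. Qed.

Lemma msubset_card_low : msubset (rdegs C) (rdegs Ph) -> (#|low| <= m)%N.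
Proof.
move=> /(msubset_count (predC (lt_rsizes C))).
move: all_rdegs_not_lt_rsizes; rewrite all_count => /eqP->; rewrite size_rdegs.
have := count_predC (lt_rsizes C) (rdegs Ph); rewrite size_rdegs count_rdegs -/low.
by have := nrows_Ph; lia.
Qed.

Lemma msubset_perm_rdegs :
  msubset (rdegs C) (rdegs Ph) -> perm_eq (rdegs (col_mx P C)) (rdegs Ph).
Proof.
move=> sub; have card_le := msubset_card_low sub.
have card_m : #|low| = m by apply/eqP; rewrite eqn_leq card_le card_low_ge.
have lowP : [seq x <- rdegs Ph | lt_rsizes C x] = rdegs P.
  have e := congr1 (map (fun v => rsize v 0)) (low_rows_eq card_le).
  rewrite -2!map_comp in e.
  rewrite /rdegs filter_map (eq_map (rsize_row Ph)) (eq_map (rsize_row P)).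
  exact e.
have perm_high : perm_eq (rdegs C) [seq x <- rdegs Ph | predC (lt_rsizes C) x].
  apply: msubset_perm => [x|].
    rewrite count_filter -{1}(all_filterP all_rdegs_not_lt_rsizes) count_filter.
    exact: msubset_count.
  rewrite size_filter size_rdegs (@eq_count _ _ (predC (lt_rsizes C))) //.
  have := count_predC (lt_rsizes C) (rdegs Ph); rewrite size_rdegs count_rdegs -/low.
  by have := nrows_Ph; lia.
apply: perm_trans (perm_rdegs_col_mx P C) _.
by rewrite perm_sym -(perm_filterC (lt_rsizes C) (rdegs Ph)) perm_sym lowP perm_cat2l.
Qed.

End Completion.

End PolyMatrices.

(* The rank hypothesis on [A] is implied by [A] having an [m]-row Popov form. *)
Theorem lemma3p2 (K : fieldType) (m n : nat) (Hmn : (m < n)%N)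
  (A P : 'M[{poly K}]_(m, n)) (C : 'M[{poly K}]_(n - m, n))
  (Phat : 'M[{poly K}]_(n, n)) :
  prank A = m ->
  popov_form_of A P ->
  \det (castmx (subnKC (ltnW Hmn), erefl n) (col_mx A C)) != 0 ->
  (forall i, msize P < rsize C i)%N ->
  popov_form_of (castmx (subnKC (ltnW Hmn), erefl n) (col_mx A C)) Phat ->
  (completion P C <-> msubset (rdegs C) (rdegs Phat)) /\
  (completion P C ->
     [seq row i Phat | i <- enum 'I_n & [forall j, rsize Phat i < rsize C j]%N]
     = [seq row i P | i <- enum 'I_m]).
Proof.
move=> _ [popP sameAP] detM ltPC [popPh sameMPh].
set e := subnKC (ltnW Hmn); set Q := col_mx P C.
have sameMQ : same_rowmod (castmx (e, erefl n) (col_mx A C)) Q.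
  by move=> v; rewrite in_rowmod_castmx; split; apply: rowmod_col_mx_sub => w /sameAP.
have sameQPh : same_rowmod Q Phat by move=> v; rewrite -sameMQ sameMPh.
have rfQ : row_free (frac_mx Q).
  apply/eqP; rewrite -/(prank Q) -(prank_same_rowmod sameMQ) /prank.
  by rewrite mxrank_unit ?e // unitmxE det_map_mx unitfE tofrac_eq0.
have ltPQ i j : (rsize P i < rsize C j)%N by apply: leq_ltn_trans (ltPC j); apply: leq_bigmax.
have fwd : completion P C -> perm_eq (rdegs Q) (rdegs Phat).
  by case=> _ rQ; apply: perm_rdegs_row_reduced rQ (popov_row_reduced popPh) sameQPh.
split; [split=> [/fwd permQ x | sub] | move=> /fwd permQ].
- rewrite -(seq.permP permQ) (seq.permP (perm_rdegs_col_mx P C)) count_cat.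
  exact: leq_addl.
- split=> //; apply/(row_reduced_castmx e).
  apply: row_reduced_perm_rdegs (popov_row_reduced popPh) _.
    by move=> v; rewrite in_rowmod_castmx; apply: sameQPh.
  by rewrite rdegs_castmx; apply: msubset_perm_rdegs.
apply: low_rows_eq => //; apply/eq_leq; exact: perm_rdegs_card_low.
Qed.
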